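(* Let $\mathcal{M}$ be a circular embedding of a connected graph $X$ on a closed orientable surface, with vertex-face transition matrix $U$, and let $\widehat C=\widehat N^T\widehat M$. Let $\mu\in(0,1)$ be an eigenvalue of $\widehat C\widehat C^T$, and choose $\theta$ with $\cos\theta=2\mu-1$. Let $E_\mu$ be the orthogonal projection onto the $\mu$-eigenspace of $\widehat C\widehat C^T$, let $P=\widehat M\widehat M^T$, and set $W=\widehat NE_\mu\widehat N^T$. Then the $e^{i\theta}$-eigenprojection of $U$ is \[\frac{1}{\sin^2\theta}\Big((\cos\theta+1)W-(e^{i\theta}+1)PW-(e^{-i\theta}+1)WP+2PWP\Big),\] and the $e^{-i\theta}$-eigenprojection of $U$ is \[\frac{1}{\sin^2\theta}\Big((\cos\theta+1)W-(e^{-i\theta}+1)PW-(e^{i\theta}+1)WP+2PWP\Big).\]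
   Context: Setting. A circular embedding is a cellular embedding in which every face is bounded by a cycle. Arcs are ordered pairs $(u,v)$ with $\{u,v\}$ an edge, and $u$ is the tail. Consistent orientation. Fix an orientation of the face boundaries such that each edge shared by two faces receives opposite directions in them. Then every arc lies in exactly one facial walk. Matrices. - $M$ is the arc-face incidence matrix ($M_{(a,b),f}=1$ iff $(a,b)$ lies in the facial walk of $f$). - $N$ is the arc-tail incidence matrix ($N_{(a,b),u}=1$ iff $a=u$). - $\widehat M,\widehat N$ are these matrices with columns scaled to unit length. - $U=(2\widehat M\widehat M^T-I)(2\widehat N\widehat N^T-I)$ is the vertex-face transition matrix. An eigenprojection is the orthogonal projection onto the corresponding eigenspace. *)

From HB Require Import structures.
From mathcomp Require Import all_boot all_order all_algebra all_fingroup.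
From mathcomp Require Import reals trigo complex.

Set Implicit Arguments.
Unset Strict Implicit.
Unset Printing Implicit Defensive.

Import GRing.Theory Num.Theory.
Local Open Scope ring_scope.

(* A cellular embedding of a connected graph on a closed orientable surface  *)
(* is (up to homeomorphism) the same as a rotation system: at every vertex u *)
(* a cyclic order of the arcs with tail u.  We encode it as a permutation    *)
(* sigma of the arcs preserving tails and acting transitively (as a single   *)
(* cycle) on the arcs with a given tail.  The facial walks (consistently     *)
(* oriented) are the orbits of  phi (u,v) := sigma (v,u).                    *)

Section Graph.
Variables (V : finType) (adj : rel V).

Definition simple_graph : Prop := symmetric adj /\ irreflexive adj.

Definition connected_graph : Prop := forall u v : V, connect adj u v.

Definition darc : finType := {p : V * V | adj p.1 p.2}.

Definition atail (a : darc) : V := (val a).1.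
Definition ahead (a : darc) : V := (val a).2.

Definition rotation_system (sigma : {perm darc}) : Prop :=
  (forall a : darc, atail (sigma a) = atail a) /\
  (forall a b : darc, atail a = atail b -> fconnect sigma a b).

Definition face_next (sigma : {perm darc}) : rel darc :=
  fun a b => [exists r : darc, (val r == (ahead a, atail a)) && (sigma r == b)].

Definition face_of (sigma : {perm darc}) (a : darc) : {set darc} :=
  [set b | connect (face_next sigma) a b].

Definition faces (sigma : {perm darc}) : {set {set darc}} :=
  [set face_of sigma a | a : darc].

(* circular embedding: every facial walk is a cycle, i.e. it has length at
   least 3 and visits pairwise distinct vertices *)
Definition circular (sigma : {perm darc}) : Prop :=
  forall a : darc, {in face_of sigma a &, injective atail} /\
                  (3 <= #|face_of sigma a|)%N.

Variable K : numClosedFieldType.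

Definition nA := #|{: darc}|.
Definition nV := #|{: V}|.

Definition Mmx (sigma : {perm darc}) : 'M[K]_(nA, #|faces sigma|) :=
  \matrix_(i < nA, j < #|faces sigma|)
     ((enum_val i \in (enum_val j : {set darc})) : nat)%:R.

Definition Nmx : 'M[K]_(nA, nV) :=
  \matrix_(i < nA, u < nV) ((atail (enum_val i) == enum_val u) : nat)%:R.

Definition col_normalize m n (A : 'M[K]_(m, n)) : 'M[K]_(m, n) :=
  \matrix_(i, j) (A i j / sqrtC (\sum_(k < m) `|A k j| ^+ 2)).

Definition Mhat (sigma : {perm darc}) := col_normalize (Mmx sigma).
Definition Nhat := col_normalize Nmx.

Definition transition_mx (sigma : {perm darc}) : 'M[K]_nA :=
  (2%:R *: (Mhat sigma *m (Mhat sigma)^T) - 1%:M) *m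
  (2%:R *: (Nhat *m Nhat^T) - 1%:M).

End Graph.

Section Proj.
Variable K : numClosedFieldType.

Definition adjmx m n (A : 'M[K]_(m, n)) : 'M[K]_(n, m) :=
  (map_mx Num.conj A)^T.

Definition is_orth_proj n (S : 'cV[K]_n -> Prop) (E : 'M[K]_n) : Prop :=
  forall x : 'cV[K]_n,
    S (E *m x) /\ (forall y : 'cV[K]_n, S y -> adjmx y *m (x - E *m x) = 0).

Definition eigsp n (A : 'M[K]_n) (lambda : K) : 'cV[K]_n -> Prop :=
  fun x => A *m x = lambda *: x.

Definition is_eigenprojection n (A : 'M[K]_n) (lambda : K) (E : 'M[K]_n) :=
  is_orth_proj (eigsp A lambda) E.

End Proj.

From HB Require Import structures.
From mathcomp Require Import all_boot all_order all_algebra all_fingroup.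
From mathcomp Require Import reals trigo complex.
From mathcomp Require Import ring.
Import GRing.Theory Num.Theory.
Local Open Scope ring_scope.

Set Implicit Arguments.
Unset Strict Implicit.

(* Let Q := Nh Nh^T.  Every arc has exactly one tail and lies in exactly one
   face, so the column-normalized incidence matrices satisfy Nh Nh^T Nh = Nh
   and Mh Mh^T Mh = Mh: P and Q are orthogonal projections, U = (2P - 1)(2Q - 1)
   is a product of two reflections, and Ch Ch^T = Nh^T P Nh.
   Put z = e^{i theta}, so that mu = (z + 2 + 1/z) / 4, and let F be the
   displayed combination of W, PW, WP and PWP before division by sin^2 theta.
   Since Q W = W and Q P W = mu W, expanding gives U F = z F.  Conversely, if
   U y = z y then (2Q - 1) y = z (2P - 1) y, hence P Q y = (1 + z)/2 P y and
   Q P y = (1 + 1/z)/2 Q y; thus Nh^T y is a mu-eigenvector of Nh^T P Nh, so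
   W y = Q y and F y = sin^2 theta y.  As F is Hermitian, F / sin^2 theta is
   the orthogonal projection onto the z-eigenspace; the e^{-i theta} case
   exchanges z and 1/z. *)

Section Adjoint.
Variable K : numClosedFieldType.

Lemma adjmx_mul m n p (A : 'M[K]_(m, n)) (B : 'M[K]_(n, p)) :
  adjmx (A *m B) = adjmx B *m adjmx A.
Proof. by rewrite /adjmx map_mxM trmx_mul. Qed.

Lemma adjmxK m n (A : 'M[K]_(m, n)) : adjmx (adjmx A) = A.
Proof. by apply/matrixP=> i j; rewrite !mxE conjCK. Qed.

Lemma adjmxZ m n a (A : 'M[K]_(m, n)) : adjmx (a *: A) = Num.conj a *: adjmx A.
Proof. by apply/matrixP=> i j; rewrite !mxE rmorphM. Qed.

Lemma adjmxD m n (A B : 'M[K]_(m, n)) : adjmx (A + B) = adjmx A + adjmx B.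
Proof. by apply/matrixP=> i j; rewrite !mxE rmorphD. Qed.

Lemma adjmxN m n (A : 'M[K]_(m, n)) : adjmx (- A) = - adjmx A.
Proof. by apply/matrixP=> i j; rewrite !mxE rmorphN. Qed.

Lemma adjmxB m n (A B : 'M[K]_(m, n)) : adjmx (A - B) = adjmx A - adjmx B.
Proof. by rewrite adjmxD adjmxN. Qed.

Lemma adjmx_real m n (A : 'M[K]_(m, n)) :
  map_mx Num.conj A = A -> adjmx A = A^T.
Proof. by rewrite /adjmx => ->. Qed.

Lemma adjmx_tr_real m n (A : 'M[K]_(m, n)) :
  map_mx Num.conj A = A -> adjmx A^T = A.
Proof. by rewrite /adjmx map_trmx trmxK => ->. Qed.

Lemma adjmx_mul_tr_real m n (A : 'M[K]_(m, n)) :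
  map_mx Num.conj A = A -> adjmx (A *m A^T) = A *m A^T.
Proof. by move=> A_real; rewrite adjmx_mul adjmx_tr_real // adjmx_real. Qed.

Lemma adjmx_mul_self_eq0 n (v : 'cV[K]_n) : adjmx v *m v = 0 -> v = 0.
Proof.
move=> /matrixP/(_ 0 0); rewrite !mxE => norm_v0.
have v_i0 i : Num.conj (v i 0) * v i 0 = 0.
  apply: (psumr_eq0P (P := predT) (F := fun k => Num.conj (v k 0) * v k 0)) => // [k _|].
    by rewrite mulrC mul_conjC_ge0.
  by apply: etrans norm_v0; apply: eq_bigr => k _; rewrite !mxE.
apply/matrixP=> i j; rewrite (ord1 j) mxE.
by apply/eqP; rewrite -mul_conjC_eq0 mulrC v_i0.
Qed.

Lemma eq_mulmx_cV m n (A B : 'M[K]_(m, n)) :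
  (forall x : 'cV[K]_n, A *m x = B *m x) -> A = B.
Proof.
move=> eqAB; apply/matrixP=> i j.
by have := congr1 (fun C : 'cV_m => C i 0) (eqAB (delta_mx j 0)); rewrite -!colE !mxE.
Qed.

Lemma adjmx_form_eq0 m n (A : 'M[K]_(m, n)) :
  (forall (x : 'cV[K]_m) (y : 'cV[K]_n), adjmx x *m A *m y = 0) -> A = 0.
Proof.
move=> A_form0; apply: eq_mulmx_cV => y; rewrite mul0mx.
by apply: adjmx_mul_self_eq0; rewrite mulmxA A_form0.
Qed.

End Adjoint.

Section OrthogonalProjection.
Variables (K : numClosedFieldType) (n : nat).
Implicit Types (S : 'cV[K]_n -> Prop) (A E : 'M[K]_n).

Lemma orth_proj_id S E y : is_orth_proj S E -> S y -> E *m y = y.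
Proof.
move=> E_proj Sy; apply/eqP; rewrite eq_sym -subr_eq0; apply/eqP.
apply: adjmx_mul_self_eq0; rewrite adjmxB mulmxBl (E_proj y).2 //.
by rewrite (E_proj y).2 ?subrr //; exact: (E_proj y).1.
Qed.

Lemma orth_proj_adj S E : is_orth_proj S E -> adjmx E = E.
Proof.
move=> E_proj.
have adjE_E : adjmx E = adjmx E *m E.
  apply/eqP; rewrite -subr_eq0 -{1}[adjmx E]mulmx1 -mulmxBr; apply/eqP.
  apply: adjmx_form_eq0 => x y; rewrite mulmxA -adjmx_mul -mulmxA mulmxBl mul1mx.
  exact: (E_proj y).2 (E_proj x).1.
have := congr1 (@adjmx _ _ _) adjE_E.
by rewrite adjmxK adjmx_mul adjmxK -adjE_E => /esym.
Qed.

Lemma orth_projI S E :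
  adjmx E = E -> (forall x, S (E *m x)) -> (forall y, S y -> E *m y = y) ->
  is_orth_proj S E.
Proof.
move=> E_adj S_E E_id x; split=> // y Sy.
by rewrite mulmxBr mulmxA -E_adj -adjmx_mul E_id // subrr.
Qed.

Lemma eigenprojection_mulmx A lambda E :
  is_eigenprojection A lambda E -> A *m E = lambda *: E.
Proof.
by move=> E_proj; apply: eq_mulmx_cV => x; rewrite -mulmxA (E_proj x).1 scalemxAl.
Qed.

Lemma reflection_mx_sqr A : A *m A = A ->
  (2%:R *: A - 1%:M) *m (2%:R *: A - 1%:M) = 1%:M.
Proof.
move=> A_idem; rewrite mulmxBl !mulmxBr -!scalemxAl -!scalemxAr A_idem !mul1mx mulmx1.
by apply/matrixP=> i j; rewrite !mxE; ring.
Qed.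

End OrthogonalProjection.

Section ReflectionProduct.
Variables (K : numClosedFieldType) (n m : nat).
Variables (P : 'M[K]_n) (N : 'M[K]_(n, m)) (E : 'M[K]_m) (mu z zb c s2 : K).
Hypothesis P_idem : P *m P = P.
Hypothesis N_pinv : N *m N^T *m N = N.
Hypothesis E_eigen : is_eigenprojection (N^T *m P *m N) mu E.
Hypothesis z_zb : z * zb = 1.
Hypothesis c_def : c = (z + zb) / 2%:R.
Hypothesis mu_def : mu = (c + 1) / 2%:R.
Hypothesis s2_def : s2 = 1 - c ^+ 2.
Hypothesis s2_neq0 : s2 != 0.

Let z_neq0 : z != 0.
Proof. by rewrite -unitfE; apply/unitrP; exists zb; rewrite mulrC z_zb. Qed.

Let zb_def : zb = z^-1.
Proof. by rewrite (mulr1_eq z_zb). Qed.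

Lemma reflection_product_mulmx (Q W : 'M[K]_n) :
  Q *m W = W -> Q *m P *m W = mu *: W ->
  let F := (c + 1) *: W - (z + 1) *: (P *m W) - (zb + 1) *: (W *m P)
           + 2%:R *: (P *m W *m P) in
  (2%:R *: P - 1%:M) *m (2%:R *: Q - 1%:M) *m F = z *: F.
Proof.
move=> QW QPW F.
have P_idem' X : X *m P *m P = X *m P by rewrite -mulmxA P_idem.
have QW' X : X *m Q *m W = X *m W by rewrite -mulmxA QW.
have QPW' X : X *m Q *m P *m W = mu *: (X *m W) by rewrite scalemxAr -QPW !mulmxA.
(* Reduce every left-associated monomial to a multiple of W, P W, W P or P W P. *)
rewrite {}/F; do 3 rewrite ?(mulmxDl, mulmxBl, mulmxDr, mulmxBr, mul1mx, mulmx1, mulmxA,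
   mulNmx, mulmxN, P_idem, P_idem', QW, QW', QPW, QPW', =^~scalemxAl, =^~scalemxAr).
clear P_idem' QW' QPW' QW QPW.
move: W (W *m P) (P *m W) (P *m W *m P) => W0 WP PW PWP.
by apply/matrixP=> i j; rewrite !mxE mu_def c_def zb_def; field.
Qed.

Local Notation Q := (N *m N^T).
Local Notation U := ((2%:R *: P - 1%:M) *m (2%:R *: Q - 1%:M)).
Local Notation W := (N *m E *m N^T).
Local Notation F := ((c + 1) *: W - (z + 1) *: (P *m W) - (zb + 1) *: (W *m P)
                     + 2%:R *: (P *m W *m P)).

Let z_neq1 : z != 1.
Proof.
apply: contra_neq s2_neq0 => z1; rewrite s2_def c_def zb_def z1 invr1.
by apply/eqP; rewrite subr_eq0 eq_sym; apply/eqP; field.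
Qed.

Lemma trmx_mul_pinv : N^T *m Q = N^T.
Proof. by have := congr1 trmx N_pinv; rewrite !trmx_mul trmxK mulmxA. Qed.

Lemma pinv_mul_tr_idem : Q *m Q = Q.
Proof. by rewrite mulmxA N_pinv. Qed.

Section Eigenvector.
Variable y : 'cV[K]_n.
Hypothesis U_y : U *m y = z *: y.

Lemma reflection_eigvec : 2%:R *: (Q *m y) - y = z *: (2%:R *: (P *m y) - y).
Proof.
have := congr1 (mulmx (2%:R *: P - 1%:M)) U_y.
rewrite !mulmxA reflection_mx_sqr // mul1mx -scalemxAr.
by rewrite !mulmxBl -!scalemxAl !mul1mx.
Qed.

Lemma P_Q_eigvec : P *m (Q *m y) = ((z + 1) / 2%:R) *: (P *m y).
Proof.
have := congr1 (mulmx P) reflection_eigvec.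
rewrite !(mulmxBr, =^~scalemxAr) [P *m (P *m y)]mulmxA P_idem.
move: (P *m (Q *m y)) (P *m y) => PQy Py /matrixP e; apply/matrixP=> i j.
move: (e i j); rewrite !mxE => {}e.
transitivity (((2%:R * PQy i j - Py i j) + Py i j) / 2%:R); first by field.
by rewrite e; field.
Qed.

Lemma Q_P_eigvec : Q *m (P *m y) = ((zb + 1) / 2%:R) *: (Q *m y).
Proof.
have := congr1 (mulmx Q) reflection_eigvec.
rewrite !(mulmxBr, =^~scalemxAr) [Q *m (Q *m y)]mulmxA pinv_mul_tr_idem.
move: (Q *m (P *m y)) (Q *m y) => QPy Qy /matrixP e; apply/matrixP=> i j.
move: (e i j); rewrite !mxE zb_def => {}e.
transitivity ((z * (2%:R * QPy i j - Qy i j) - (2%:R * Qy i j - Qy i j)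
               + (z + 1) * Qy i j) / (2%:R * z)); first by field.
by rewrite e subrr add0r; field.
Qed.

Lemma trN_P_eigvec : N^T *m (P *m y) = ((zb + 1) / 2%:R) *: (N^T *m y).
Proof.
by rewrite -[in LHS]trmx_mul_pinv -mulmxA Q_P_eigvec -scalemxAr mulmxA trmx_mul_pinv.
Qed.

Lemma W_eigvec : W *m y = Q *m y.
Proof.
have G_Nty : N^T *m P *m N *m (N^T *m y) = mu *: (N^T *m y).
  have -> : N^T *m P *m N *m (N^T *m y) = N^T *m (P *m (Q *m y)) by rewrite !mulmxA.
  rewrite P_Q_eigvec -scalemxAr trN_P_eigvec scalerA; congr (_ *: _).
  by rewrite mu_def c_def zb_def; field.
have E_Nty := orth_proj_id E_eigen G_Nty.
by rewrite -!mulmxA E_Nty mulmxA.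
Qed.

Lemma F_eigvec : F *m y = s2 *: y.
Proof.
have WPy : W *m (P *m y) = ((zb + 1) / 2%:R) *: (Q *m y).
  by rewrite -mulmxA trN_P_eigvec -!scalemxAr mulmxA W_eigvec.
rewrite !(mulmxDl, mulmxBl, mulNmx) -!scalemxAl W_eigvec -[P *m W *m y]mulmxA W_eigvec.
rewrite -[W *m P *m y]mulmxA WPy -[P *m W *m P *m y]mulmxA -[P *m W *m _]mulmxA.
rewrite WPy -scalemxAr !P_Q_eigvec !scalerA.
have z1_neq0 : z - 1 != 0 by rewrite subr_eq0.
move: reflection_eigvec; move: y (Q *m y) (P *m y) => Y Qy Py /matrixP e.
apply/matrixP=> i j; move: (e i j); rewrite !mxE => {}e.
have -> : Y i j = (2%:R * z * Py i j - 2%:R * Qy i j) / (z - 1).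
  transitivity ((2%:R * z * Py i j - 2%:R * Qy i j
     - (z * (2%:R * Py i j - Y i j) - (2%:R * Qy i j - Y i j))) / (z - 1)).
    by field.
  by rewrite -e subrr subr0.
by rewrite s2_def c_def zb_def; field; rewrite z1_neq0 z_neq0.
Qed.

End Eigenvector.

Lemma transition_mulmx_F : U *m F = z *: F.
Proof.
apply: reflection_product_mulmx; first by rewrite !mulmxA N_pinv.
have -> : Q *m P *m W = N *m (N^T *m P *m N *m E) *m N^T by rewrite !mulmxA.
by rewrite (eigenprojection_mulmx E_eigen) -scalemxAr -scalemxAl.
Qed.

Hypothesis P_adj : adjmx P = P.
Hypothesis N_real : map_mx Num.conj N = N.
Hypothesis conj_z : Num.conj z = zb.

Let conj_zb : Num.conj zb = z.
Proof. by rewrite -conj_z conjCK. Qed.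

Let conj_c : Num.conj c = c.
Proof. by rewrite c_def rmorphM rmorphD /= conj_z conj_zb fmorphV rmorph_nat addrC. Qed.

Lemma adjmx_F : adjmx F = F.
Proof.
rewrite !adjmxD !adjmxN !adjmxZ !adjmx_mul (orth_proj_adj E_eigen) P_adj.
rewrite adjmx_tr_real // adjmx_real // rmorph_nat !rmorphD /= rmorph1 conj_c conj_z conj_zb.
by rewrite !mulmxA (addrAC ((c + 1) *: _)).
Qed.

Theorem transition_eigenprojection : is_eigenprojection U z (s2^-1 *: F).
Proof.
have conj_s2 : Num.conj (s2^-1) = s2^-1.
  by rewrite fmorphV s2_def rmorphB rmorph1 rmorphXn /= conj_c.
apply: orth_projI => [|x|y U_y].
- by rewrite adjmxZ conj_s2 adjmx_F.
- by rewrite /eigsp mulmxA -scalemxAr transition_mulmx_F scalerA mulrC -scalerA -scalemxAl.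
- by rewrite -scalemxAl F_eigvec // scalerA mulVf // scale1r.
Qed.

End ReflectionProduct.

Section BoolColNormalize.
Variables (K : numClosedFieldType) (p q : nat) (b : 'I_p -> 'I_q -> bool).

Local Notation B := (col_normalize (\matrix_(i, j) ((b i j : nat)%:R : K))).
Local Notation col_size j := (\sum_(k < p) ((b k j : nat)%:R : K)).

Lemma col_normalize_boolE i j : B i j = (b i j : nat)%:R / sqrtC (col_size j).
Proof.
rewrite !mxE; congr (_ / sqrtC _); apply: eq_bigr => k _.
by rewrite mxE; case: (b k j); rewrite ?normr1 ?normr0 ?expr1n ?expr0n.
Qed.

Lemma col_normalize_bool_real : map_mx Num.conj B = B.
Proof.
apply/matrixP=> i j; rewrite [LHS]mxE col_normalize_boolE; apply: conj_Creal.
rewrite rpredM ?rpred_nat // rpredV ger0_real // sqrtC_ge0.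
by apply: sumr_ge0 => k _; exact: ler0n.
Qed.

Hypothesis b_uniq : forall i j j', b i j -> b i j' -> j = j'.

Lemma col_normalize_bool_gram :
  B^T *m B = diag_mx (\row_j ((col_size j != 0) : nat)%:R).
Proof.
apply/matrixP=> l j; rewrite [LHS]mxE !mxE.
under eq_bigr => k _ do rewrite mxE !col_normalize_boolE.
have [<-|lj] := eqVneq l j; last first.
  apply: big1 => k _; case bl: (b k l); case bj: (b k j); rewrite ?mul0r ?mulr0 //.
  by move: lj; rewrite (b_uniq bl bj) eqxx.
transitivity (col_size l / sqrtC (col_size l) ^+ 2).
  rewrite mulr_suml; apply: eq_bigr => k _.
  by case: (b k l); rewrite ?mul0r // !mul1r -invfM -expr2.
rewrite sqrtCK mulr1n; have [->|nz] := eqVneq (col_size l) 0; first by rewrite mul0r.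
by rewrite mulfV.
Qed.

Lemma col_normalize_bool_pinv : B *m B^T *m B = B.
Proof.
rewrite -mulmxA col_normalize_bool_gram mul_mx_diag; apply/matrixP=> i j.
rewrite mxE [d in _ * d]mxE col_normalize_boolE.
by have [->|_] := eqVneq (col_size j) 0; rewrite ?sqrtC0 ?invr0 ?mulr0 ?mulr1.
Qed.

End BoolColNormalize.

Section Embedding.
Variables (V : finType) (adj : rel V) (K : numClosedFieldType).

Hypothesis adj_sym : symmetric adj.

Lemma darc_rev_adj (a : darc adj) : adj (ahead a) (atail a).
Proof. by rewrite adj_sym; exact: (valP a). Qed.

Definition rev_darc (a : darc adj) : darc adj :=
  exist (fun e : V * V => adj e.1 e.2) (ahead a, atail a) (darc_rev_adj a).

Lemma rev_darcK : involutive rev_darc.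
Proof. by move=> a; apply: val_inj; case: a => [[u v] ?]. Qed.

Variable sigma : {perm darc adj}.

Lemma face_nextE : face_next sigma =2 frel (sigma \o rev_darc).
Proof.
move=> a b; apply/existsP/eqP => [[r /andP[/eqP r_rev /eqP <-]]|<-].
  by congr (sigma _); apply: val_inj; rewrite r_rev.
by exists (rev_darc a); rewrite !eqxx.
Qed.

Lemma face_next_connect_sym : connect_sym (face_next sigma).
Proof.
move=> a b; rewrite !(eq_connect face_nextE); apply: fconnect_sym.
exact: inj_comp perm_inj (can_inj rev_darcK).
Qed.

Lemma face_of_eq (a1 a2 x : darc adj) :
  x \in face_of sigma a1 -> x \in face_of sigma a2 -> face_of sigma a1 = face_of sigma a2.
Proof.
rewrite !inE => a1x a2x; apply/setP => y; rewrite !inE.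
apply: same_connect; first exact: face_next_connect_sym.
by apply: connect_trans a1x _; rewrite face_next_connect_sym.
Qed.

Lemma enum_faces_uniq (i : 'I_(nA adj)) (j j' : 'I_#|faces sigma|) :
  enum_val i \in (enum_val j : {set darc adj}) ->
  enum_val i \in (enum_val j' : {set darc adj}) -> j = j'.
Proof.
move=> ij ij'; apply: enum_val_inj.
have /imsetP[a1 _ e1] := enum_valP j; have /imsetP[a2 _ e2] := enum_valP j'.
rewrite e1 e2 in ij ij' *; exact: face_of_eq ij ij'.
Qed.

Lemma Mhat_pinv : Mhat K sigma *m (Mhat K sigma)^T *m Mhat K sigma = Mhat K sigma.
Proof. exact: col_normalize_bool_pinv enum_faces_uniq. Qed.

Lemma Mhat_real : map_mx Num.conj (Mhat K sigma) = Mhat K sigma.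
Proof. exact: col_normalize_bool_real. Qed.

Lemma Nhat_pinv : Nhat adj K *m (Nhat adj K)^T *m Nhat adj K = Nhat adj K.
Proof.
apply: col_normalize_bool_pinv => i u u' /eqP iu /eqP iu'.
by apply: enum_val_inj; rewrite -iu -iu'.
Qed.

Lemma Nhat_real : map_mx Num.conj (Nhat adj K) = Nhat adj K.
Proof. exact: col_normalize_bool_real. Qed.

End Embedding.

Local Open Scope complex_scope.

Section UnitCircle.
Variables (R : realType) (t : R).

Lemma cis_mulJ : (cos t +i* sin t) * (cos t -i* sin t) = 1.
Proof. by simpc; rewrite -!expr2 cos2Dsin2 (mulrC (sin t)) addNr. Qed.

Lemma conj_cis : Num.conj (cos t +i* sin t) = cos t -i* sin t.
Proof. by []. Qed.

Lemma conj_cisJ : Num.conj (cos t -i* sin t) = cos t +i* sin t.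
Proof. exact: (conjCK (cos t +i* sin t)). Qed.

Lemma cos_cisE : (cos t)%:C = ((cos t +i* sin t) + (cos t -i* sin t)) / 2%:R.
Proof.
have -> : (cos t +i* sin t) + (cos t -i* sin t) = (cos t *+ 2)%:C by simpc.
by rewrite rmorphMn -mulr_natr mulfK ?pnatr_eq0.
Qed.

Lemma sin_sqr_cosE : (sin t ^+ 2)%:C = 1 - (cos t)%:C ^+ 2.
Proof. by rewrite sin2cos2 rmorphB rmorph1 rmorphXn. Qed.

Lemma sin_sqr_neq0 (mu : R) : 0 < mu < 1 -> cos t = 2 * mu - 1 -> sin t ^+ 2 != 0.
Proof.
move=> /andP[mu_gt0 mu_lt1] cos_mu; rewrite sin2cos2 cos_mu.
have -> : 1 - (2 * mu - 1) ^+ 2 = 4%:R * mu * (1 - mu) by ring.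
by apply: lt0r_neq0; rewrite !mulr_gt0 ?subr_gt0.
Qed.

End UnitCircle.

Theorem corollary3p5 (R : realType) (V : finType) (adj : rel V)
  (sigma : {perm darc adj}) :
  simple_graph adj -> connected_graph adj ->
  rotation_system sigma -> circular sigma ->
  forall (mu : R), 0 < mu < 1 ->
  let Chat := (Nhat adj R[i])^T *m Mhat R[i] sigma in
  eigenvalue (Chat *m Chat^T) mu%:C ->
  forall theta : R, cos theta = 2 * mu - 1 ->
  forall Emu : 'M[R[i]]_(nV V),
  is_eigenprojection (Chat *m Chat^T) mu%:C Emu ->
  let U := transition_mx R[i] sigma in
  let P := Mhat R[i] sigma *m (Mhat R[i] sigma)^T in
  let W := Nhat adj R[i] *m Emu *m (Nhat adj R[i])^T in
  let z := cos theta +i* sin theta in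
  let zb := cos theta -i* sin theta in
  is_eigenprojection U z
    (((sin theta ^+ 2)%:C)^-1 *:
       ((cos theta + 1)%:C *: W - (z + 1) *: (P *m W) - (zb + 1) *: (W *m P)
        + 2%:R *: (P *m W *m P))) /\
  is_eigenprojection U zb
    (((sin theta ^+ 2)%:C)^-1 *:
       ((cos theta + 1)%:C *: W - (zb + 1) *: (P *m W) - (z + 1) *: (W *m P)
        + 2%:R *: (P *m W *m P))).
Proof.
move=> [adj_sym _] _ _ _ mu mu01 Chat _ theta cos_mu Emu E_eigen U P W z zb.
have P_idem : P *m P = P by rewrite mulmxA (Mhat_pinv _ adj_sym).
have P_adj : adjmx P = P by apply/adjmx_mul_tr_real/Mhat_real.
have G_def : Chat *m Chat^T = (Nhat adj R[i])^T *m P *m Nhat adj R[i].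
  by rewrite trmx_mul trmxK !mulmxA.
rewrite G_def in E_eigen.
have mu_cos : mu%:C = ((cos theta)%:C + 1) / 2%:R.
  by rewrite cos_mu rmorphB rmorphM rmorph_nat rmorph1 /=; field.
have s2_neq0 : (sin theta ^+ 2)%:C != 0 by rewrite fmorph_eq0 (sin_sqr_neq0 mu01).
have -> : (cos theta + 1)%:C = (cos theta)%:C + 1 by rewrite rmorphD.
have N_pinv := Nhat_pinv adj R[i]; have N_real := Nhat_real adj R[i].
split.
  exact: (transition_eigenprojection P_idem N_pinv E_eigen (cis_mulJ theta)
    (cos_cisE theta) mu_cos (sin_sqr_cosE theta) s2_neq0 P_adj N_real (conj_cis theta)).
apply: (transition_eigenprojection P_idem N_pinv E_eigen _ _ mu_cos
  (sin_sqr_cosE theta) s2_neq0 P_adj N_real (conj_cisJ theta)).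
  by rewrite mulrC cis_mulJ.
by rewrite addrC cos_cisE.
Qed.
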